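(* Let $M$ be an entrywise nonnegative $m\times n$ real matrix and let $M=AW$ be a stable nonnegative matrix factorization with $A\in\mathbb{R}_{\ge0}^{m\times r}$, $W\in\mathbb{R}_{\ge0}^{r\times n}$. Let $s=\mathrm{rank}(A)$, let $U\subseteq[m]$ be a set of $s$ linearly independent rows of $A$, and let $B_1,\dots,B_p$ be the ensemble of $A$ at $U$. Then for each column index $i$, $W_i$ is contained in the set $\{B_1M_i^U,\dots,B_pM_i^U\}$.
   Context: Notation: $M_i$ is the $i$-th column, $M^j$ the $j$-th row; $A_S$ denotes columns in $S$, $A^U$ rows in $U$, $M_i^U$ the entries of $M_i$ in rows $U$. $\mathrm{aff}(A)=\{\sum_i\alpha_iA_i:\alpha_i\ge0\}$. A subset $S\subseteq[r]$ of columns of $A$ is admissible for $v\in\mathbb{R}^m$ if $v\in\mathrm{aff}(A_S)$; a subset $T\subseteq[r]$ of rows of $W$ is admissible for a row vector $u$ if $u$ is a nonnegative combination of the rows of $W^T$. Lexicographic ordering on subsets of $[r]$: if $|S|<|T|$ then $S$ precedes $T$; equal-size subsets compared by standard lexicographic order. $M=AW$ is stable if, with $S_i$ the lexicographically first subset of columns of $A$ admissible for $M_i$ and $T_j$ the lexicographically first subset of rows of $W$ admissible for $M^j$, each $W_i$ is supported in $S_i$ and each row $A^j$ is supported in $T_j$. Ensemble: let $S_1,\dots,S_p$ be all sets of $s$ linearly independent columns of $A$, in lexicographic order; $B_k$ is the $r\times s$ matrix that is zero on rows outside $S_k$ and whose restriction to rows $S_k$ equals $(A^U_{S_k})^{-1}$.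 *)

From HB Require Import structures.
From mathcomp Require Import all_boot all_order all_algebra.
Set Implicit Arguments. Unset Strict Implicit. Unset Printing Implicit Defensive.
Import Order.TTheory GRing.Theory Num.Theory.
Local Open Scope ring_scope.

Section NMF.
Variable R : realFieldType.

Definition nonneg_mx (p q : nat) (X : 'M[R]_(p, q)) : Prop :=
  forall i j, 0 <= X i j.

Fixpoint seq_lexlt (s t : seq nat) : bool :=
  match s, t with
  | x :: s', y :: t' => (x < y)%N || ((x == y) && seq_lexlt s' t')
  | _, _ => false
  end.

Definition sorted_elems (k : nat) (S : {set 'I_k}) : seq nat :=
  sort leq [seq val x | x <- enum S].

Definition subset_lexlt (k : nat) (S T : {set 'I_k}) : Prop :=
  (#|S| < #|T|)%N \/ (#|S| = #|T| /\ seq_lexlt (sorted_elems S) (sorted_elems T)).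

Definition lex_first (k : nat) (P : {set 'I_k} -> Prop) (S : {set 'I_k}) : Prop :=
  P S /\ forall T, P T -> T <> S -> subset_lexlt S T.

Definition admissible_cols (m r : nat) (A : 'M[R]_(m, r)) (S : {set 'I_r})
  (v : 'cV[R]_m) : Prop :=
  exists alpha : 'I_r -> R, (forall i, 0 <= alpha i) /\
    v = \sum_(i in S) alpha i *: col i A.

Definition admissible_rows (r n : nat) (W : 'M[R]_(r, n)) (T : {set 'I_r})
  (u : 'rV[R]_n) : Prop :=
  exists beta : 'I_r -> R, (forall j, 0 <= beta j) /\
    u = \sum_(j in T) beta j *: row j W.

Definition stable_fact (m n r : nat) (M : 'M[R]_(m, n)) (A : 'M[R]_(m, r))
  (W : 'M[R]_(r, n)) : Prop :=
  M = A *m W /\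
  (forall (i : 'I_n) (S : {set 'I_r}),
     lex_first (fun S => admissible_cols A S (col i M)) S ->
     forall k, k \notin S -> W k i = 0) /\
  (forall (j : 'I_m) (T : {set 'I_r}),
     lex_first (fun T => admissible_rows W T (row j M)) T ->
     forall k, k \notin T -> A j k = 0).

Definition rows_of (m r : nat) (A : 'M[R]_(m, r)) (U : {set 'I_m}) : 'M[R]_(#|U|, r) :=
  \matrix_(k < #|U|, j < r) A (enum_val k) j.

Definition cols_of (m r : nat) (A : 'M[R]_(m, r)) (S : {set 'I_r}) : 'M[R]_(m, #|S|) :=
  \matrix_(i < m, k < #|S|) A i (enum_val k).

Definition colU (m n : nat) (M : 'M[R]_(m, n)) (U : {set 'I_m}) (i : 'I_n) : 'cV[R]_#|U| :=
  \col_(k < #|U|) M (enum_val k) i.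

Definition AUS (m r : nat) (A : 'M[R]_(m, r)) (U : {set 'I_m}) (S : {set 'I_r})
  (hS : #|S| = #|U|) : 'M[R]_#|U| :=
  \matrix_(k < #|U|, l < #|U|) A (enum_val k) (enum_val (cast_ord (esym hS) l)).

Definition embedS (r u : nat) (S : {set 'I_r}) (hS : #|S| = u) : 'M[R]_(r, u) :=
  \matrix_(j < r, l < u) (j == enum_val (cast_ord (esym hS) l))%:R.

(* the ensemble matrix B_S: zero on rows outside S, equal to (A^U_S)^{-1} on rows S *)
Definition ensemble_mx (m r : nat) (A : 'M[R]_(m, r)) (U : {set 'I_m}) (S : {set 'I_r})
  (hS : #|S| = #|U|) : 'M[R]_(r, #|U|) :=
  embedS hS *m invmx (AUS A hS).

Definition lin_indep_cols (m r : nat) (A : 'M[R]_(m, r)) (S : {set 'I_r}) : Prop :=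
  row_free (cols_of A S)^T.

End NMF.

From Stdlib Require Import Wf_nat Classical.
From HB Require Import structures.
From mathcomp Require Import all_boot all_order all_algebra.
From mathcomp Require Import zify.
Import Order.TTheory GRing.Theory Num.Theory.
Set Implicit Arguments. Unset Strict Implicit. Unset Printing Implicit Defensive.

(* The lexicographically first admissible set S0 for M_i = A W_i has linearly
   independent columns: otherwise a kernel vector supported on S0 lets one shift
   the conic coefficients until one of them vanishes (Caratheodory), giving a
   smaller admissible set.  Stability puts the support of W_i inside S0; extend
   S0 to a set S of rank A independent columns.  As the rows U span the row
   space of A, the square block A^U_S is invertible and M_i^U = A^U_S (W_i)_S,
   so B_S M_i^U = W_i. *)

Lemma ltn_leading_digit (v B x y u : nat) :
  (u < B)%N -> (x < y)%N -> (x * B + u < y * B + v)%N.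
Proof.
move=> ltuB ltxy; have : (x.+1 * B <= y * B)%N by rewrite leq_mul2r ltxy orbT.
rewrite mulSn; lia.
Qed.

Fixpoint nat_of_digits (b : nat) (s : seq nat) : nat :=
  if s is x :: s' then (x * b ^ size s' + nat_of_digits b s')%N else 0%N.

Section Digits.
Variable b : nat.
Let digits (s : seq nat) := all (fun x => x < b)%N s.

Lemma nat_of_digits_lt s : digits s -> (nat_of_digits b s < b ^ size s)%N.
Proof.
elim: s => [|x s IH] /=; first by rewrite expn0.
move=> /andP[ltxb /IH lts]; rewrite expnS.
have : (x.+1 * b ^ size s <= b * b ^ size s)%N by rewrite leq_mul2r ltxb orbT.
rewrite mulSn; lia.
Qed.

Lemma nat_of_digits_lexlt s t : size s = size t -> digits s -> digits t ->
  (nat_of_digits b s < nat_of_digits b t)%N -> seq_lexlt s t.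
Proof.
elim: s t => [|x s IH] [|y t] //= [eq_st] /andP[_ ds] /andP[_ dt] lt_st.
have lts := nat_of_digits_lt ds; rewrite -eq_st in lt_st.
case: (ltngtP x y) => [//|ltyx|eqxy]; last first.
  by rewrite IH //; move: lt_st; rewrite eqxy; lia.
have := ltn_leading_digit (nat_of_digits b s) (nat_of_digits_lt dt) ltyx.
by rewrite -eq_st; lia.
Qed.

Lemma nat_of_digits_inj s t : size s = size t -> digits s -> digits t ->
  nat_of_digits b s = nat_of_digits b t -> s = t.
Proof.
elim: s t => [|x s IH] [|y t] //= [eq_st] /andP[_ ds] /andP[_ dt] eq_val.
have lts := nat_of_digits_lt ds; have ltt := nat_of_digits_lt dt.
rewrite -eq_st in eq_val ltt.
case: (ltngtP x y) => [ltxy|ltyx|eqxy].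
- by have := ltn_leading_digit (nat_of_digits b t) lts ltxy; lia.
- by have := ltn_leading_digit (nat_of_digits b s) ltt ltyx; lia.
- by rewrite eqxy (IH t) //; move: eq_val; rewrite eqxy; lia.
Qed.
End Digits.

Lemma exists_min_key (T : Type) (key : T -> nat) (P : T -> Prop) (x0 : T) :
  P x0 -> exists x, P x /\ forall y, P y -> (key x <= key y)%N.
Proof.
move=> Px0.
have [n [[[x [Px <-]] min_n] _]] := dec_inh_nat_subset_has_unique_least_element
  (fun n => exists x, P x /\ key x = n) (fun n => classic _)
  (ex_intro _ _ (ex_intro _ x0 (conj Px0 erefl))).
by exists x; split=> // y Py; apply/ssrnat.leP/min_n; exists y.
Qed.

Section LexFirst.
Variable r : nat.

(* A base-[r.+1] numeral with leading digit [#|S|], so that comparing keys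
   compares cardinalities first and then the sorted elements. *)
Definition lex_key (S : {set 'I_r}) : nat :=
  (#|S| * r.+1 ^ r + nat_of_digits r.+1 (sorted_elems S))%N.

Lemma size_sorted_elems (S : {set 'I_r}) : size (sorted_elems S) = #|S|.
Proof. by rewrite /sorted_elems size_sort size_map cardE. Qed.

Lemma sorted_elems_digits (S : {set 'I_r}) : all (fun x => x < r.+1)%N (sorted_elems S).
Proof.
apply/allP => x; rewrite /sorted_elems mem_sort => /mapP[y _ ->].
exact: ltnW (ltn_ord y).
Qed.

Lemma mem_sorted_elems (S : {set 'I_r}) (x : 'I_r) :
  (val x \in sorted_elems S) = (x \in S).
Proof. by rewrite /sorted_elems mem_sort (mem_map val_inj) mem_enum. Qed.

Lemma sorted_elems_value_lt (S : {set 'I_r}) :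
  (nat_of_digits r.+1 (sorted_elems S) < r.+1 ^ r)%N.
Proof.
apply: leq_trans (nat_of_digits_lt (sorted_elems_digits S)) _.
by rewrite size_sorted_elems leq_pexp2l // -[X in (_ <= X)%N](card_ord r) max_card.
Qed.

Lemma lex_key_lt (S T : {set 'I_r}) : (lex_key S < lex_key T)%N -> subset_lexlt S T.
Proof.
rewrite /lex_key => lt_key; case: (ltngtP #|S| #|T|) => [ltST|ltTS|eqST].
- by left.
- by have := ltn_leading_digit (nat_of_digits r.+1 (sorted_elems S))
    (sorted_elems_value_lt T) ltTS; lia.
- right; split => //; apply: (@nat_of_digits_lexlt r.+1);
    rewrite ?size_sorted_elems ?sorted_elems_digits //.
  by move: lt_key; rewrite eqST; lia.
Qed.

Lemma lex_key_inj : injective lex_key.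
Proof.
move=> S T; rewrite /lex_key => eq_key.
have eqST : #|S| = #|T|.
  case: (ltngtP #|S| #|T|) => [ltST|ltTS|//].
  - by have := ltn_leading_digit (nat_of_digits r.+1 (sorted_elems T))
      (sorted_elems_value_lt S) ltST; lia.
  - by have := ltn_leading_digit (nat_of_digits r.+1 (sorted_elems S))
      (sorted_elems_value_lt T) ltTS; lia.
have eq_elems : sorted_elems S = sorted_elems T.
  apply: (@nat_of_digits_inj r.+1); rewrite ?size_sorted_elems ?sorted_elems_digits //.
  by move: eq_key; rewrite eqST; lia.
by apply/setP => x; rewrite -!mem_sorted_elems eq_elems.
Qed.

Lemma lex_first_exists (P : {set 'I_r} -> Prop) (S0 : {set 'I_r}) :
  P S0 -> exists S, lex_first P S.
Proof.
move=> /(exists_min_key lex_key)[S [PS min_S]]; exists S; split=> // T PT neq_TS.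
apply: lex_key_lt; rewrite ltn_neqAle min_S // andbT.
by apply/eqP => /lex_key_inj eq_ST; apply: neq_TS.
Qed.
End LexFirst.

Local Open Scope ring_scope.

Definition supported (R : realFieldType) (r : nat) (S : {set 'I_r}) (z : 'cV[R]_r) : Prop :=
  forall j, j \notin S -> z j 0 = 0.

Lemma row_free_trP (F : fieldType) (p q : nat) (X : 'M[F]_(p, q)) :
  row_free X^T <-> (forall v : 'cV_q, X *m v = 0 -> v = 0).
Proof.
split=> [free_X v Xv0 | ker0].
  apply: trmx_inj; apply: (row_free_inj free_X).
  by rewrite -trmx_mul Xv0 !trmx0 mul0mx.
apply: inj_row_free => v vX0; apply: trmx_inj; rewrite trmx0; apply: ker0.
by apply: trmx_inj; rewrite trmx_mul trmxK vX0 trmx0.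
Qed.

Section Embedding.
Variables (R : realFieldType) (r u : nat) (S : {set 'I_r}) (hS : #|S| = u).
Let idx (l : 'I_u) : 'I_r := enum_val (cast_ord (esym hS) l).

Lemma idx_inj : injective idx.
Proof. by move=> l l' /enum_val_inj /cast_ord_inj. Qed.

Lemma embedS_mul_idx (y : 'cV[R]_u) l : (embedS R hS *m y) (idx l) 0 = y l 0.
Proof.
rewrite mxE (bigD1 l) //= mxE eqxx mul1r big1 ?addr0 // => l' neq_l'l.
rewrite mxE; case: eqP => [/idx_inj eq_ll'|_]; last by rewrite mul0r.
by rewrite eq_ll' eqxx in neq_l'l.
Qed.

Lemma embedS_supported (y : 'cV[R]_u) : supported S (embedS R hS *m y).
Proof.
move=> j notSj; rewrite mxE big1 // => l _; rewrite mxE.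
case: eqP => [eq_j|_]; last by rewrite mul0r.
by rewrite eq_j enum_valP in notSj.
Qed.

Lemma supported_embedS (w : 'cV[R]_r) :
  supported S w -> w = embedS R hS *m \col_l w (idx l) 0.
Proof.
move=> supp_w; apply/matrixP => j b; rewrite (ord1 b).
case: (boolP (j \in S)) => Sj; last by rewrite embedS_supported // supp_w.
have -> : j = idx (cast_ord hS (enum_rank_in Sj j)).
  by rewrite /idx cast_ordK enum_rankK_in.
by rewrite embedS_mul_idx mxE.
Qed.

Lemma embedS_mul0 (y : 'cV[R]_u) : embedS R hS *m y = 0 -> y = 0.
Proof.
by move=> Ey0; apply/matrixP => l b; rewrite (ord1 b) -embedS_mul_idx Ey0 !mxE.
Qed.
End Embedding.

Section Columns.
Variables (R : realFieldType) (m r : nat) (A : 'M[R]_(m, r)).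

Lemma mulmx_supported (S : {set 'I_r}) (z : 'cV[R]_r) :
  supported S z -> A *m z = \sum_(j in S) z j 0 *: col j A.
Proof.
move=> supp_z; apply/matrixP => a b; rewrite (ord1 b) summxE !mxE [RHS]big_mkcond /=.
apply: eq_bigr => j _; rewrite !mxE; case: ifP => [_|/negbT notSj]; first by rewrite mulrC.
by rewrite supp_z ?mulr0.
Qed.

Lemma cols_of_embedS (S : {set 'I_r}) : cols_of A S = A *m embedS R (erefl #|S|).
Proof.
apply/matrixP => a l; rewrite !mxE (bigD1 (enum_val l)) //= !mxE cast_ord_id eqxx mulr1.
rewrite big1 ?addr0 // => j neq_j; rewrite !mxE cast_ord_id.
by rewrite (negbTE neq_j) mulr0.
Qed.

Lemma lin_indep_colsP (S : {set 'I_r}) : lin_indep_cols A S <->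
  (forall z : 'cV[R]_r, supported S z -> A *m z = 0 -> z = 0).
Proof.
rewrite /lin_indep_cols row_free_trP cols_of_embedS; split=> [ker0 z supp_z Az0 | ker0 y].
  have z_eq := supported_embedS (erefl #|S|) supp_z.
  by rewrite [LHS]z_eq [X in _ *m X]ker0 ?mulmx0 // -mulmxA -z_eq.
by rewrite -mulmxA => /(ker0 _ (embedS_supported _ _)) /embedS_mul0.
Qed.

Lemma dependent_cols_pos_kernel (S : {set 'I_r}) : ~ lin_indep_cols A S ->
  exists z : 'cV[R]_r, [/\ supported S z, A *m z = 0 & exists j, 0 < z j 0].
Proof.
rewrite lin_indep_colsP => dep.
have [z [supp_z Az0 /eqP/matrix0Pn[j [b nz_zj]]]] :
    exists z : 'cV[R]_r, [/\ supported S z, A *m z = 0 & z <> 0].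
  apply: NNPP => no_z; apply: dep => z supp_z Az0.
  by apply: NNPP => nz_z; apply: no_z; exists z.
rewrite (ord1 b) in nz_zj; case: (ltrgtP (z j 0) 0) => [neg_zj|pos_zj|zj0].
- exists (- z); split; last by exists j; rewrite mxE oppr_gt0.
    by move=> k notSk; rewrite mxE supp_z ?oppr0.
  by rewrite mulmxN Az0 oppr0.
- by exists z; split=> //; exists j.
- by rewrite zj0 eqxx in nz_zj.
Qed.

(* Caratheodory step: move the coefficients along the kernel direction [-z]
   until the first one vanishes. *)
Lemma admissible_cols_drop (S : {set 'I_r}) (v : 'cV[R]_m) (z : 'cV[R]_r) (j1 : 'I_r) :
  admissible_cols A S v -> supported S z -> A *m z = 0 -> 0 < z j1 0 ->
  exists2 j0, j0 \in S & admissible_cols A (S :\ j0) v.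
Proof.
move=> [alpha [alpha_ge0 v_eq]] supp_z Az0 pos_j1.
pose ratio j := alpha j / z j 0.
have [j0 pos_j0 min_j0] := arg_minP ratio (P := fun j => 0 < z j 0) pos_j1.
set t := ratio j0; pose beta j := alpha j - t * z j 0.
have t_ge0 : 0 <= t := divr_ge0 (alpha_ge0 j0) (ltW pos_j0).
have S_j0 : j0 \in S by move: pos_j0; apply: contraLR => /supp_z ->; rewrite ltxx.
have beta_j0 : beta j0 = 0 by rewrite /beta /t /ratio divfK ?subrr ?gt_eqF.
exists j0 => //; exists beta; split=> [j|].
  rewrite subr_ge0; case: (ltrP 0 (z j 0)) => [pos_j|npos_j].
    by rewrite -ler_pdivlMr //; exact: min_j0.
  by apply: le_trans (alpha_ge0 j); rewrite mulr_ge0_le0.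
have drop_j0 : \sum_(j in S) beta j *: col j A = \sum_(j in S :\ j0) beta j *: col j A.
  by rewrite (big_setD1 j0 S_j0) /= beta_j0 scale0r add0r.
rewrite -drop_j0 /beta; under eq_bigr do rewrite scalerBl -scalerA.
by rewrite sumrB -scaler_sumr -mulmx_supported // Az0 scaler0 subr0.
Qed.

Lemma lex_first_admissible_indep (v : 'cV[R]_m) (S : {set 'I_r}) :
  lex_first (fun S => admissible_cols A S v) S -> lin_indep_cols A S.
Proof.
move=> [adm_S first_S]; apply: NNPP => /dependent_cols_pos_kernel[z [supp_z Az0 [j pos_j]]].
have [j0 S_j0 adm_T] := admissible_cols_drop adm_S supp_z Az0 pos_j.
have card_T : (#|S :\ j0| < #|S|)%N by rewrite (cardsD1 j0 S) S_j0.
have neq_TS : S :\ j0 <> S by move=> eq_TS; rewrite eq_TS ltnn in card_T.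
by case: (first_S _ adm_T neq_TS) => [|[]]; lia.
Qed.

Lemma row_tr_cols_of (S : {set 'I_r}) l : row l (cols_of A S)^T = row (enum_val l) A^T.
Proof. by apply/matrixP => a b; rewrite !mxE. Qed.

Lemma cols_of_tr_sub (S : {set 'I_r}) : ((cols_of A S)^T <= A^T)%MS.
Proof. by apply/row_subP => l; rewrite row_tr_cols_of row_sub. Qed.

Lemma row_tr_sub_cols_of (S : {set 'I_r}) k :
  k \in S -> (row k A^T <= (cols_of A S)^T)%MS.
Proof. by move=> Sk; rewrite -(enum_rankK_in Sk Sk) -row_tr_cols_of row_sub. Qed.

Lemma lin_indep_cols_card (S : {set 'I_r}) : lin_indep_cols A S -> (#|S| <= \rank A)%N.
Proof.
by move=> /eqP <-; rewrite -[\rank A]mxrank_tr mxrankS ?cols_of_tr_sub.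
Qed.

Lemma lin_indep_colsU1 (S : {set 'I_r}) k : lin_indep_cols A S ->
  ~~ (row k A^T <= (cols_of A S)^T)%MS -> lin_indep_cols A (k |: S).
Proof.
move=> /eqP rank_S notin_span.
have notSk : k \notin S by apply: contra notin_span; exact: row_tr_sub_cols_of.
have sub_S : ((cols_of A S)^T <= (cols_of A (k |: S))^T)%MS.
  by apply/row_subP => l; rewrite row_tr_cols_of row_tr_sub_cols_of // setU1r ?enum_valP.
have lt_S : ((cols_of A S)^T < (cols_of A (k |: S))^T)%MS.
  rewrite ltmxE sub_S; apply: contra notin_span => /(submx_trans _); apply.
  by rewrite row_tr_sub_cols_of // setU11.
have card_kS : #|k |: S| = #|S|.+1 by rewrite cardsU1 notSk.
have := rank_ltmx lt_S; rewrite rank_S.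
rewrite /lin_indep_cols /row_free eqn_leq rank_leq_row => /= lt_rank.
exact: leq_trans (eq_leq card_kS) lt_rank.
Qed.

Lemma lin_indep_cols_extend (S : {set 'I_r}) : lin_indep_cols A S ->
  exists2 S' : {set 'I_r}, S \subset S' & lin_indep_cols A S' /\ #|S'| = \rank A.
Proof.
move=> indep_S; pose P (T : {set 'I_r}) := (S \subset T) && row_free (cols_of A T)^T.
have [T /andP[sub_T indep_T] max_T] := arg_maxnP (fun T => #|T|) (P := P) (i0 := S)
  (introT andP (conj (subxx S) indep_S)).
exists T => //; split=> //; apply/eqP; rewrite eqn_leq lin_indep_cols_card //=.
rewrite leqNgt; apply/negP => lt_T.
have [k notin_span] : exists k, ~~ (row k A^T <= (cols_of A T)^T)%MS.
  apply/row_subPn/negP => /mxrankS; rewrite mxrank_tr (eqP indep_T).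
  by rewrite leqNgt lt_T.
have notTk : k \notin T by apply: contra notin_span; exact: row_tr_sub_cols_of.
suff : P (k |: T) by move/max_T; rewrite /= cardsU1 notTk add1n ltnn.
by rewrite /P (subset_trans sub_T (subsetUr _ _)) lin_indep_colsU1.
Qed.
End Columns.

Lemma supported_subset (R : realFieldType) (r : nat) (S S' : {set 'I_r}) (z : 'cV[R]_r) :
  S \subset S' -> supported S z -> supported S' z.
Proof.
by move=> sub_S supp_z j notS'j; apply: supp_z; apply: contra notS'j; apply: subsetP.
Qed.

Lemma colU_mulmx (R : realFieldType) (m n r : nat) (A : 'M[R]_(m, r)) (W : 'M[R]_(r, n))
  (U : {set 'I_m}) (i : 'I_n) : colU (A *m W) U i = rows_of A U *m col i W.
Proof. by apply/matrixP => k b; rewrite !mxE; apply: eq_bigr => j _; rewrite !mxE. Qed.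

Section Ensemble.
Variables (R : realFieldType) (m r : nat) (A : 'M[R]_(m, r)) (U : {set 'I_m}).
Hypotheses (hU : #|U| = \rank A) (hUind : row_free (rows_of A U)).

Lemma AUS_embedS (S : {set 'I_r}) (hS : #|S| = #|U|) :
  AUS A hS = rows_of A U *m embedS R hS.
Proof.
apply/matrixP => k l; rewrite !mxE (bigD1 (enum_val (cast_ord (esym hS) l))) //=.
rewrite !mxE eqxx mulr1 big1 ?addr0 // => j neq_j.
by rewrite !mxE (negbTE neq_j) mulr0.
Qed.

Lemma rows_of_full : (A <= rows_of A U)%MS.
Proof.
have sub_A : (rows_of A U <= A)%MS.
  apply/row_subP => k; rewrite (_ : row k _ = row (enum_val k) A) ?row_sub //.
  by apply/matrixP => a b; rewrite !mxE.
have := mxrank_leqif_eq sub_A; rewrite -hU (eqP hUind) => /geq_leqif.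
by rewrite leqnn => /esym/andP[].
Qed.

Lemma AUS_unit (S : {set 'I_r}) (hS : #|S| = #|U|) :
  lin_indep_cols A S -> AUS A hS \in unitmx.
Proof.
move=> /lin_indep_colsP ker0; rewrite -unitmx_tr -row_free_unit row_free_trP => y AUSy0.
apply: (embedS_mul0 (hS := hS)); apply: ker0; first exact: embedS_supported.
have [C ->] := submxP rows_of_full.
by rewrite -!mulmxA [rows_of A U *m _]mulmxA -AUS_embedS AUSy0 mulmx0.
Qed.

Lemma ensemble_mxK (S : {set 'I_r}) (hS : #|S| = #|U|) (w : 'cV[R]_r) :
  lin_indep_cols A S -> supported S w -> ensemble_mx A hS *m (rows_of A U *m w) = w.
Proof.
move=> indep_S supp_w; have w_eq := supported_embedS hS supp_w.
by rewrite [in LHS]w_eq mulmxA -AUS_embedS /ensemble_mx -mulmxA mulKmx ?AUS_unit // -w_eq.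
Qed.
End Ensemble.

Theorem mainTheorem5 (R : realFieldType) (m n r : nat)
  (M : 'M[R]_(m, n)) (A : 'M[R]_(m, r)) (W : 'M[R]_(r, n))
  (hM : nonneg_mx M) (hA : nonneg_mx A) (hW : nonneg_mx W)
  (hstab : stable_fact M A W)
  (U : {set 'I_m}) (hU : #|U| = \rank A) (hUind : row_free (rows_of A U)) :
  forall i : 'I_n,
    exists (S : {set 'I_r}) (hS : #|S| = #|U|),
      lin_indep_cols A S /\ col i W = ensemble_mx A hS *m colU M U i.
Proof.
move=> i; case: hstab => [MAW [supp_first _]].
have adm_all : admissible_cols A [set: 'I_r] (col i M).
  exists (W^~ i); split=> [k|]; first exact: hW.
  rewrite MAW !colE -mulmxA -colE (@mulmx_supported _ _ _ _ setT) => [|j].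
    by apply: eq_bigr => j _; rewrite mxE.
  by rewrite in_setT.
have [S0 first_S0] :=
  lex_first_exists (P := fun S => admissible_cols A S (col i M)) adm_all.
have supp_S0 : supported S0 (col i W).
  by move=> k notS0k; rewrite mxE (supp_first i S0 first_S0).
have [S sub_S [indep_S card_S]] :=
  lin_indep_cols_extend (lex_first_admissible_indep first_S0).
have hS : #|S| = #|U| by rewrite card_S hU.
exists S, hS; split=> //.
rewrite MAW colU_mulmx ensemble_mxK //; exact: supported_subset sub_S supp_S0.
Qed.
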